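(* Let $r\ge 1$ and let $\mathcal{R}$ be a block of $\mathcal{A}_e^r$. Then there exists $M_\ast$ such that for every integer $M\ge M_\ast$, with $\mathbf{M}=(0,M,2M,\dots,(e-1)M)$, every element of $\Psi_r(\mathrm{Str}(\mathcal{R};\mathbf{M}))$ is a Rouquier partition, and $\Psi_r(\mathrm{Str}(\mathcal{R};\mathbf{M}))$ is contained in a single $r$-Rouquier block of $\mathcal{A}_e$.
   Context: Fix an integer $e\ge 2$. A partition is a weakly decreasing sequence $\lambda=(\lambda_1,\lambda_2,\dots)$ of non-negative integers with finite sum $|\lambda|$; $\Lambda$ denotes the set of partitions and $\Lambda^{(m)}$ the set of $m$-multipartitions, i.e. $m$-tuples $\boldsymbol\lambda=(\lambda^{(1)},\dots,\lambda^{(m)})$ of partitions, with $|\boldsymbol\lambda|=\sum_k|\lambda^{(k)}|$. A $\beta$-set is a subset $B\subseteq\mathbb{Z}$ containing all sufficiently small integers and no sufficiently large ones. For $\lambda\in\Lambda$ and $s\in\mathbb{Z}$ set $B_s(\lambda)=\{\lambda_i-i+s : i\ge 1\}$; every $\beta$-set equals $B_s(\lambda)$ for a unique pair $(\lambda,s)$. Let $\mathcal{A}_e=\Lambda\times\mathbb{Z}$ (abacus configurations with $e$ runners) and $\mathcal{A}_e^m=\Lambda^{(m)}\times\mathbb{Z}^m$, where $(\boldsymbol\lambda,\mathbf{s})$ is identified with the $m$-tuple of $\beta$-sets $(B_{s_1}(\lambda^{(1)}),\dots,B_{s_m}(\lambda^{(m)}))$. Blocks: for $(\boldsymbol\lambda,\mathbf{s})\in\mathcal{A}_e^m$,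 its $e$-residue multiset is the multiset of the values $s_k+y-x \bmod e$ over all nodes $(x,y,k)$ with $x\ge1$, $1\le y\le\lambda^{(k)}_x$, $1\le k\le m$. Define $(\boldsymbol\lambda,\mathbf{s})\approx_e(\boldsymbol\mu,\mathbf{s}')$ iff $\mathbf{s}=\mathbf{s}'$, $|\boldsymbol\lambda|=|\boldsymbol\mu|$ and the $e$-residue multisets coincide. Its equivalence classes are called blocks. The map $\eta$: for $(\lambda,s)\in\mathcal{A}_e$ with $B=B_s(\lambda)$ and $0\le i<e$, the set $C_i=\{(b-i)/e : b\in B,\ b\equiv i \bmod e\}$ is a $\beta$-set, so $C_i=B_{t_i}(\rho_i)$ for a unique $(\rho_i,t_i)\in\Lambda\times\mathbb{Z}$; set $\eta(\lambda,s)=((\rho_0,\dots,\rho_{e-1}),(t_0,\dots,t_{e-1}))$. The $e$-weight of $\lambda$ is $\mathrm{wt}(\lambda)=\sum_i|\rho_i|$. Rouquier: $(\lambda,s)\in\mathcal{A}_e$ with $\eta(\lambda,s)=(\boldsymbol\rho,\mathbf{t})$ is a Rouquier partition if $\mathrm{wt}(\lambda)\le t_{i+1}-t_i+1$ for all $0\le i<e-1$, and an $r$-Rouquier partition if $\mathrm{wt}(\lambda)\le t_{i+1}-t_i+r$ for all $0\le i<e-1$. A block of $\mathcal{A}_e$ is an $r$-Rouquier block if all its elements are $r$-Rouquier partitions. Uglov's map: for $1\le k\le r$ define $\psi_k:\mathbb{Z}\to\mathbb{Z}$ by $\psi_k(ae+i)=((a+1)r-k)e+i$ for $a\in\mathbb{Z}$,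 $0\le i<e$. For $(\boldsymbol\lambda,\mathbf{s})\in\mathcal{A}_e^r$ the set $B=\bigsqcup_{k=1}^r\psi_k(B_{s_k}(\lambda^{(k)}))$ is a $\beta$-set, and $\Psi_r(\boldsymbol\lambda,\mathbf{s})$ is the unique $(\tilde\lambda,\tilde s)\in\mathcal{A}_e$ with $B_{\tilde s}(\tilde\lambda)=B$. Stretching: for $\mathbf{M}\in\mathbb{Z}^e$ and $(\lambda,s)\in\mathcal{A}_e$ with $\eta(\lambda,s)=(\boldsymbol\rho,(t_0,\dots,t_{e-1}))$, $\mathrm{Str}((\lambda,s);\mathbf{M})$ is the unique element of $\mathcal{A}_e$ whose image under $\eta$ is $(\boldsymbol\rho,(t_0+M_0,\dots,t_{e-1}+M_{e-1}))$. For $(\boldsymbol\lambda,\mathbf{s})\in\mathcal{A}_e^r$, $\mathrm{Str}((\boldsymbol\lambda,\mathbf{s});\mathbf{M})$ is obtained by applying this to each component $(\lambda^{(k)},s_k)$; for a subset $\mathcal{R}$, $\mathrm{Str}(\mathcal{R};\mathbf{M})$ is its image. *)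

From mathcomp Require Import all_boot all_order all_algebra.
From Stdlib Require Import ClassicalEpsilon.

Unset Printing Implicit Defensive.

Import Order.TTheory GRing.Theory Num.Theory.
Local Open Scope ring_scope.

Definition is_part (l : seq nat) : bool :=
  sorted geq l && all (fun x => (0 < x)%N) l.

Definition partition := {l : seq nat | is_part l}.

Definition part_nil : partition := exist _ [::] erefl.

(* lambda_i for i >= 1 (and 0 beyond the length) *)
Definition part (la : partition) (i : nat) : nat := nth 0%N (sval la) i.-1.

Definition psize (la : partition) : nat := sumn (sval la).

Definition conf := (partition * int)%type.
(* A_e^m = Lambda^(m) x Z^m ; components indexed by 'I_m (k = 0..m-1 stands for k+1) *)
Definition mconf (m : nat) := (('I_m -> partition) * ('I_m -> int))%type.

Definition single (c : conf) : mconf 1 := (fun _ => c.1, fun _ => c.2).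

Definition beta (s : int) (la : partition) (b : int) : Prop :=
  exists i : nat, (0 < i)%N /\ b = (part la i)%:Z - i%:Z + s.

Lemma conf_inhabited : inhabited conf.
Proof. exact: inhabits (part_nil, 0). Qed.

(* the unique (lambda, s) with B_s(lambda) = B  (for B a beta-set) *)
Definition beta_inv (B : int -> Prop) : conf :=
  epsilon conf_inhabited (fun p => forall b, beta p.2 p.1 b <-> B b).

Definition res_count (e : nat) (m : nat) (x : mconf m) (j : nat) : nat :=
  (\sum_(k < m) \sum_(1 <= a < (size (sval (x.1 k))).+1)
     \sum_(1 <= b < (part (x.1 k) a).+1)
        ((((x.2 k) + b%:Z - a%:Z) %% e%:Z)%Z == j%:Z : nat))%N.

Definition msize (m : nat) (x : mconf m) : nat := (\sum_(k < m) psize (x.1 k))%N.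

Definition mequiv (e m : nat) (x y : mconf m) : Prop :=
  (forall k, x.2 k = y.2 k) /\ msize m x = msize m y /\
  (forall j : 'I_e, res_count e m x j = res_count e m y j).

Definition is_mblock (e m : nat) (R : mconf m -> Prop) : Prop :=
  exists x, forall y, R y <-> mequiv e m x y.

(* blocks of A_e (identified with A_e^1) *)
Definition is_block (e : nat) (B : conf -> Prop) : Prop :=
  exists x, forall y, B y <-> mequiv e 1 (single x) (single y).

Definition runner (e : nat) (c : conf) (i : nat) : int -> Prop :=
  fun a => beta c.2 c.1 (a * e%:Z + i%:Z).

Definition eta_rho (e : nat) (c : conf) (i : nat) : partition :=
  (beta_inv (runner e c i)).1.
Definition eta_t (e : nat) (c : conf) (i : nat) : int :=
  (beta_inv (runner e c i)).2.

Definition wt (e : nat) (c : conf) : nat := (\sum_(i < e) psize (eta_rho e c i))%N.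

Definition rRouquier (e : nat) (r : int) (c : conf) : Prop :=
  forall i : nat, (i.+1 < e)%N -> (wt e c)%:Z <= eta_t e c i.+1 - eta_t e c i + r.

Definition Rouquier (e : nat) (c : conf) : Prop := rRouquier e 1 c.

Definition rRouquier_block (e : nat) (r : int) (B : conf -> Prop) : Prop :=
  is_block e B /\ forall c, B c -> rRouquier e r c.

Definition str (e : nat) (c : conf) (Mv : nat -> int) : conf :=
  epsilon conf_inhabited (fun c' => forall i : nat, (i < e)%N ->
     eta_rho e c' i = eta_rho e c i /\ eta_t e c' i = eta_t e c i + Mv i).

Definition mstr (e m : nat) (x : mconf m) (Mv : nat -> int) : mconf m :=
  (fun k => (str e (x.1 k, x.2 k) Mv).1, fun k => (str e (x.1 k, x.2 k) Mv).2).

Definition psi (e r k : nat) (b : int) : int :=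
  (((b %/ e%:Z)%Z + 1) * r%:Z - k%:Z) * e%:Z + (b %% e%:Z)%Z.

Definition Psi (e r : nat) (x : mconf r) : conf :=
  beta_inv (fun b => exists (k : 'I_r) (b' : int),
                beta (x.2 k) (x.1 k) b' /\ b = psi e r k.+1 b').

(* Quantities attached to a beta-set [B] are compared with the vacuum [{b < s}] through
   weighted differences [sum_b f b (1_B b - 1_B' b)]: the charge, the size, the e-residue
   counts, the runner charges t_i and the e-weight all have this form.  The residue counts use
   the weight [floor ((b - j) / e)], which is affine on every runner, so they form a triangular
   system in the runner-wise contributions; solving it shows that a block determines the runner
   charges and the weight, and more generally every runner-affine weighted difference.
   Uglov's map interleaves the runners of the r components, and stretching by
   [M_i = i * M] shifts runner i of Psi_r(x) by [i * M * r].  Hence the weight of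
   Psi_r(Str(x; M)) does not depend on M while [t_(i+1) - t_i] grows like [M * r], which gives
   the Rouquier property for large M; and the runner-affine weighted differences of
   Psi_r(Str(x; M)) are expressed through the block data of x, so a block is mapped into one
   block of A_e, whose members share the runner charges and weight of a Rouquier partition. *)

From mathcomp Require Import all_boot all_order all_algebra zify ring.
From Stdlib Require Import ClassicalEpsilon FunctionalExtensionality PropExtensionality.

Set Implicit Arguments.
Unset Strict Implicit.
Unset Printing Implicit Defensive.

Import Order.TTheory GRing.Theory Num.Theory.
Local Open Scope ring_scope.

Definition pbool (P : Prop) : bool :=
  if excluded_middle_informative P then true else false.

Lemma pboolP P : reflect P (pbool P).
Proof. by rewrite /pbool; case: excluded_middle_informative => H; constructor. Qed.

Lemma predext (B B' : int -> Prop) : (forall x, B x <-> B' x) -> B = B'.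
Proof.
by move=> H; apply: functional_extensionality => x; apply: propositional_extensionality.
Qed.

Definition indicator (B : int -> Prop) (x : int) : int := (pbool (B x))%:Z.

Lemma indicator_iff B B' x : (B x <-> B' x) -> indicator B x = indicator B' x.
Proof. by move=> H; rewrite /indicator; case: pboolP => h1; case: pboolP => h2 //; tauto. Qed.

Definition window (L : int) (N : nat) : seq int := [seq L + n%:Z | n <- iota 0 N].

Lemma window_cat L a b : window L (a + b) = window L a ++ window (L + a%:Z) b.
Proof.
rewrite /window iotaD map_cat; congr (_ ++ _).
rewrite -[a in iota a b]addn0 iotaDl -map_comp; apply: eq_map => k /=.
by rewrite PoszD addrA.
Qed.

Lemma mem_window L N z : z \in window L N -> L <= z < L + N%:Z.
Proof. case/mapP=> n; rewrite mem_iota add0n => /andP[_ Hn] ->; lia. Qed.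

Lemma window_shift L m N : window (L + m) N = [seq z + m | z <- window L N].
Proof. by rewrite /window -map_comp; apply: eq_map => n /=; lia. Qed.

Lemma big_window_mul L N m (h : int -> int) :
  \sum_(z <- window (L * m%:Z) (N * m)) h z =
  \sum_(a <- window L N) \sum_(i < m) h (a * m%:Z + i%:Z).
Proof.
elim: N => [|N IH]; first by rewrite mul0n /window /= !big_nil.
rewrite mulSn addnC window_cat big_cat IH -addn1 window_cat big_cat; congr (_ + _).
rewrite /window /= big_cons big_nil addr0 big_map.
have -> : iota 0 m = index_iota 0 m by rewrite /index_iota subn0.
rewrite big_mkord.
by apply: eq_bigr => i _; congr h; nia.
Qed.

Definition wdiff_on (f : int -> int) (B B' : int -> Prop) (L : int) (N : nat) : int :=
  \sum_(x <- window L N) f x * (indicator B x - indicator B' x).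

Definition agree_off (B B' : int -> Prop) (L : int) (N : nat) : Prop :=
  forall x, x < L \/ L + N%:Z <= x -> (B x <-> B' x).

Lemma wdiff_on_eq0 f B B' L N :
  (forall z, L <= z < L + N%:Z -> (B z <-> B' z)) -> wdiff_on f B B' L N = 0.
Proof.
move=> H; rewrite /wdiff_on big1_seq // => z /andP[_ /mem_window Hz].
by rewrite (indicator_iff (H z Hz)) subrr mulr0.
Qed.

Lemma wdiff_on_cat f B B' L a b :
  wdiff_on f B B' L (a + b) = wdiff_on f B B' L a + wdiff_on f B B' (L + a%:Z) b.
Proof. by rewrite /wdiff_on window_cat big_cat. Qed.

Lemma wdiff_on_widen f B B' L N a c : agree_off B B' L N ->
  wdiff_on f B B' (L - a%:Z) (a + N + c) = wdiff_on f B B' L N.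
Proof.
move=> HLN; rewrite !wdiff_on_cat wdiff_on_eq0 ?add0r => [|z Hz]; last by apply: HLN; lia.
rewrite [wdiff_on _ _ _ _ c]wdiff_on_eq0 ?addr0 => [|z Hz]; last by apply: HLN; lia.
by congr wdiff_on; lia.
Qed.

Lemma wdiff_on_indep f B B' L N L' N' : agree_off B B' L N -> agree_off B B' L' N' ->
  wdiff_on f B B' L N = wdiff_on f B B' L' N'.
Proof.
pose L0 := Num.min L L'; pose N0 := absz (Num.max (L + N%:Z) (L' + N'%:Z) - L0)%R.
have widen l n : agree_off B B' l n -> L0 <= l -> l + n%:Z <= L0 + N0%:Z ->
    wdiff_on f B B' l n = wdiff_on f B B' L0 N0.
  move=> Hln hl hu.
  rewrite -(wdiff_on_widen f (absz (l - L0)%R) (absz (L0 + N0%:Z - (l + n%:Z))%R) Hln).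
  by congr wdiff_on; lia.
by move=> HLN HLN'; rewrite (widen L N) ?(widen L' N') //; lia.
Qed.

Lemma window_inhabited : inhabited (int * nat). Proof. exact: inhabits (0, 0%N). Qed.

(* The weighted difference [sum_x f x (1_B x - 1_B' x)], computed on any window outside
   of which [B] and [B'] agree; it is junk when there is no such window. *)
Definition wdiff (f : int -> int) (B B' : int -> Prop) : int :=
  let w := epsilon window_inhabited (fun w => agree_off B B' w.1 w.2) in
  wdiff_on f B B' w.1 w.2.

Lemma wdiffE f B B' L N : agree_off B B' L N -> wdiff f B B' = wdiff_on f B B' L N.
Proof.
move=> HLN; apply: wdiff_on_indep => //.
by apply: (epsilon_spec window_inhabited (fun w => agree_off B B' w.1 w.2)); exists (L, N).
Qed.

Lemma wdiffD f g B B' : wdiff (fun x => f x + g x) B B' = wdiff f B B' + wdiff g B B'.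
Proof. by rewrite /wdiff /wdiff_on -big_split; apply: eq_bigr => x _; rewrite mulrDl. Qed.

Lemma wdiffZ c f B B' : wdiff (fun x => c * f x) B B' = c * wdiff f B B'.
Proof. by rewrite /wdiff /wdiff_on mulr_sumr; apply: eq_bigr => x _; rewrite mulrA. Qed.

Lemma eq_wdiff f g B B' : f =1 g -> wdiff f B B' = wdiff g B B'.
Proof. by move=> H; rewrite /wdiff /wdiff_on; apply: eq_bigr => x _; rewrite H. Qed.

Lemma wdiff_affine c1 c0 B B' :
  wdiff (fun a => c1 * a + c0) B B' = c1 * wdiff id B B' + c0 * wdiff (fun _ => 1) B B'.
Proof.
rewrite wdiffD wdiffZ; congr (_ + _).
by rewrite -wdiffZ; apply: eq_wdiff => a; rewrite mulr1.
Qed.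

Definition within (B : int -> Prop) (L U : int) : Prop :=
  (forall x, x < L -> B x) /\ (forall x, U <= x -> ~ B x).

Definition is_betaset (B : int -> Prop) : Prop := exists L U, within B L U.

Lemma within_widen B L U L' U' : within B L U -> L' <= L -> U <= U' -> within B L' U'.
Proof. by move=> [H1 H2] hL hU; split=> x hx; [apply: H1 | apply: H2]; lia. Qed.

Lemma within_agree B B' L U :
  within B L U -> within B' L U -> agree_off B B' L (absz (U - L)%R).
Proof.
move=> [H1 H2] [H1' H2'] x [hx|hx]; first by split=> _; [apply: H1' | apply: H1].
have hU : U <= x by lia.
by split=> h; [case: (H2 x hU) | case: (H2' x hU)].
Qed.

Lemma betaset_within2 B B' : is_betaset B -> is_betaset B' ->
  exists L U, within B L U /\ within B' L U.
Proof.
move=> [L [U H]] [L' [U' H']]; exists (Num.min L L'), (Num.max U U').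
by split; [apply: within_widen H _ _ | apply: within_widen H' _ _]; lia.
Qed.

Lemma betaset_within3 B1 B2 B3 : is_betaset B1 -> is_betaset B2 -> is_betaset B3 ->
  exists L U, [/\ within B1 L U, within B2 L U & within B3 L U].
Proof.
move=> b1 b2 b3; have [L [U [h1 h3]]] := betaset_within2 b1 b3.
have [L' [U' [h2 _]]] := betaset_within2 b2 b3.
exists (Num.min L L'), (Num.max U U').
by split; [apply: within_widen h1 _ _ | apply: within_widen h2 _ _ | apply: within_widen h3 _ _];
  lia.
Qed.

Lemma wdiff_within f B B' L U : within B L U -> within B' L U ->
  wdiff f B B' = wdiff_on f B B' L (absz (U - L)%R).
Proof. by move=> HB HB'; apply: wdiffE; apply: within_agree. Qed.

Lemma wdiff_trans f B1 B2 B3 : is_betaset B1 -> is_betaset B2 -> is_betaset B3 ->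
  wdiff f B1 B3 = wdiff f B1 B2 + wdiff f B2 B3.
Proof.
move=> b1 b2 b3; have [L [U [h1 h2 h3]]] := betaset_within3 b1 b2 b3.
rewrite (wdiff_within f h1 h3) (wdiff_within f h1 h2) (wdiff_within f h2 h3).
rewrite /wdiff_on -big_split; apply: eq_bigr => x _ /=; ring.
Qed.

Lemma wdiffii f B : wdiff f B B = 0.
Proof. by rewrite (@wdiffE _ _ _ 0 0) // /wdiff_on big_nil. Qed.

Lemma wdiff_sym f B B' : is_betaset B -> is_betaset B' -> wdiff f B B' = - wdiff f B' B.
Proof. by move=> b b'; apply/eqP; rewrite -addr_eq0 -wdiff_trans // wdiffii. Qed.

Definition add_point (B : int -> Prop) (x : int) : int -> Prop := fun z => B z \/ z = x.

Lemma betaset_add_point B x : is_betaset B -> is_betaset (add_point B x).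
Proof.
move=> [L [U [H1 H2]]]; exists L, (Num.max U (x + 1)); split=> z hz; first by left; apply: H1.
by case=> [|hzx]; [apply: H2 | ]; lia.
Qed.

Lemma wdiff_add_point f B x : is_betaset B -> ~ B x -> wdiff f (add_point B x) B = f x.
Proof.
move=> [L [U hB]] nBx.
have hL : L <= x by case: (lerP L x) => // /(proj1 hB).
pose U0 := Num.max U (x + 1).
have h1 : within B L U0 by apply: within_widen hB _ _; lia.
have h2 : within (add_point B x) L U0.
  case: h1 => H1 H2; split=> z hz; first by left; apply: H1.
  by case=> [|hzx]; [apply: H2 | rewrite /U0 in hz; lia].
have same z : z != x -> (add_point B x z <-> B z).
  by move=> /eqP nzx; split; [case | left].
rewrite (wdiff_within f h2 h1).
have -> : absz (U0 - L)%R = (absz (x - L)%R + 1 + absz (U0 - (x + 1))%R)%N by lia.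
rewrite !wdiff_on_cat (@wdiff_on_eq0 f _ _ L) => [|z hz]; last by apply: same; lia.
rewrite [wdiff_on _ _ _ _ (absz _)]wdiff_on_eq0 => [|z hz]; last by apply: same; lia.
rewrite add0r addr0 /wdiff_on /window /= big_cons big_nil addr0.
have -> : L + (absz (x - L)%R)%:Z + 0%N%:Z = x by lia.
rewrite /indicator; case: pboolP => [_|[]]; last by right.
by case: pboolP => // _; rewrite subr0 mulr1.
Qed.

Definition vacuum (s : int) : int -> Prop := fun z => z < s.

Lemma within_vacuum s : within (vacuum s) s s.
Proof. by split=> x hx; rewrite /vacuum; lia. Qed.

Lemma betaset_vacuum s : is_betaset (vacuum s).
Proof. by exists s, s; apply: within_vacuum. Qed.

Lemma wdiff_vacuumS f t : wdiff f (vacuum (t + 1)) (vacuum t) = f t.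
Proof.
have -> : vacuum (t + 1) = add_point (vacuum t) t.
  by apply: predext => z; rewrite /add_point /vacuum; lia.
by apply: wdiff_add_point; [apply: betaset_vacuum | rewrite /vacuum; lia].
Qed.

Definition charge (B : int -> Prop) : int := wdiff (fun _ => 1) B (vacuum 0).

Lemma charge_vacuum s : charge (vacuum s) = s.
Proof.
have chargeS t : charge (vacuum (t + 1)) = charge (vacuum t) + 1.
  rewrite /charge (wdiff_trans _ _ (betaset_vacuum t)) ?wdiff_vacuumS 1?addrC //;
  exact: betaset_vacuum.
have charge_up t (n : nat) : charge (vacuum (t + n%:Z)) = charge (vacuum t) + n%:Z.
  elim: n => [|n IH]; first by rewrite !addr0.
  by rewrite -addn1 PoszD addrA chargeS IH addrA.
have charge0 : charge (vacuum 0) = 0 by rewrite /charge wdiffii.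
case: (lerP 0 s) => hs.
  by have := charge_up 0 (absz s); rewrite charge0 !add0r gez0_abs.
have := charge_up s (absz s); rewrite ltz0_abs // subrr charge0; lia.
Qed.

Lemma charge_diff B B' : is_betaset B -> is_betaset B' ->
  wdiff (fun _ => 1) B B' = charge B - charge B'.
Proof.
move=> bB bB'; rewrite /charge (wdiff_trans _ bB (betaset_vacuum 0) bB').
by rewrite (wdiff_sym _ (betaset_vacuum 0) bB').
Qed.

Definition shift (m : int) (B : int -> Prop) : int -> Prop := fun z => B (z - m).

Lemma within_shift m B L U : within B L U -> within (shift m B) (L + m) (U + m).
Proof. by move=> [H1 H2]; split=> x hx; rewrite /shift; [apply: H1 | apply: H2]; lia. Qed.

Lemma betaset_shift m B : is_betaset B -> is_betaset (shift m B).
Proof. by move=> [L [U h]]; exists (L + m), (U + m); apply: within_shift. Qed.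

Lemma shift_vacuum m t : shift m (vacuum t) = vacuum (t + m).
Proof. by apply: predext => z; rewrite /shift /vacuum; lia. Qed.

Lemma wdiff_shift f m B B' : is_betaset B -> is_betaset B' ->
  wdiff f (shift m B) (shift m B') = wdiff (fun z => f (z + m)) B B'.
Proof.
move=> bB bB'; have [L [U [h1 h2]]] := betaset_within2 bB bB'.
rewrite (wdiff_within _ h1 h2) (wdiff_within _ (within_shift m h1) (within_shift m h2)).
have -> : absz (U + m - (L + m))%R = absz (U - L)%R by lia.
by rewrite /wdiff_on window_shift big_map; apply: eq_bigr => z _; rewrite /shift /indicator !addrK.
Qed.

Lemma charge_shift m B : is_betaset B -> charge (shift m B) = charge B + m.
Proof.
move=> bB; have b0 := betaset_vacuum 0.
rewrite {1}/charge (wdiff_trans _ (betaset_shift m bB) (betaset_vacuum m) b0).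
rewrite -/(charge (vacuum m)) charge_vacuum -[m in vacuum m]add0r -shift_vacuum.
by rewrite wdiff_shift.
Qed.

Lemma wdiff_id_shift m B : is_betaset B ->
  wdiff id (shift m B) (vacuum (charge (shift m B))) = wdiff id B (vacuum (charge B)).
Proof.
move=> bB; have bv := betaset_vacuum (charge B).
rewrite charge_shift // -shift_vacuum wdiff_shift //.
rewrite (@eq_wdiff _ (fun z => 1 * z + m)) => [|z]; last by rewrite mul1r.
by rewrite wdiff_affine mul1r charge_diff // (charge_vacuum (charge B)) subrr mulr0 addr0.
Qed.

Lemma divz_modz_unique (m q r z : int) : 0 < m -> 0 <= r < m -> z = q * m + r ->
  (z %/ m)%Z = q /\ (z %% m)%Z = r.
Proof.
move=> hm hr ->; split; last by rewrite modzMDl modz_small.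
by rewrite divzMDl ?gt_eqF // divz_small ?addr0 // gtz0_abs.
Qed.

Lemma betaset_within_family (n : nat) (Bs : nat -> int -> Prop) :
  (forall i, (i < n)%N -> is_betaset (Bs i)) ->
  exists L U, forall i, (i < n)%N -> within (Bs i) L U.
Proof.
elim: n => [|n IH] Hn; first by exists 0, 0.
have [L [U HLU]] := IH (fun i hi => Hn i (ltnW hi)).
have [L' [U' h']] := Hn n (ltnSn n).
exists (Num.min L L'), (Num.max U U') => i; rewrite ltnS leq_eqVlt => /orP[/eqP->|hi].
  by apply: within_widen h' _ _; lia.
by apply: within_widen (HLU i hi) _ _; lia.
Qed.

Section Runners.

Variable m : nat.

Lemma divz_modz_runner a (i : nat) : (i < m)%N ->
  ((a * m%:Z + i%:Z) %/ m%:Z)%Z = a /\ ((a * m%:Z + i%:Z) %% m%:Z)%Z = i%:Z.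
Proof. by move=> hi; apply: divz_modz_unique => //; lia. Qed.

Definition runner_of (i : nat) (B : int -> Prop) : int -> Prop :=
  fun a => B (a * m%:Z + i%:Z).

Lemma within_runner_of i B L U : (i < m)%N -> within B L U ->
  within (runner_of i B) (- (absz L)%:Z) (absz U)%:Z.
Proof. by move=> hi [H1 H2]; split=> a ha; [apply: H1 | apply: H2]; nia. Qed.

Lemma betaset_runner_of i B : (i < m)%N -> is_betaset B -> is_betaset (runner_of i B).
Proof. by move=> hi [L [U h]]; do 2 eexists; apply: within_runner_of h. Qed.

Hypothesis m_gt0 : (0 < m)%N.

Lemma int_euclid (z : int) : exists a (i : nat), (i < m)%N /\ z = a * m%:Z + i%:Z.
Proof.
have hm : 0 < m%:Z by lia.
exists (z %/ m%:Z)%Z, (absz (z %% m%:Z)%Z); split.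
  by have := ltz_pmod z hm; have := modz_ge0 z (lt0r_neq0 hm); lia.
by rewrite gez0_abs ?modz_ge0 ?lt0r_neq0 // -divz_eq.
Qed.

Lemma runner_of_ext B B' :
  (forall i, (i < m)%N -> runner_of i B = runner_of i B') -> B = B'.
Proof.
move=> H; apply: predext => z; have [a [i [hi ->]]] := int_euclid z.
by have := H i hi => /(congr1 (fun X => X a)); rewrite /runner_of => ->.
Qed.

Lemma betaset_runners B : (forall i, (i < m)%N -> is_betaset (runner_of i B)) -> is_betaset B.
Proof.
move=> /betaset_within_family[L [U HLU]]; have hm : 0 < m%:Z by lia.
exists (L * m%:Z), (U * m%:Z); split=> z; have [a [i [hi ->]]] := int_euclid z => hz.
  by apply: (proj1 (HLU i hi)); nia.
by apply: (proj2 (HLU i hi)); nia.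
Qed.

Lemma wdiff_runners f B B' : is_betaset B -> is_betaset B' ->
  wdiff f B B' =
  \sum_(i < m) wdiff (fun a => f (a * m%:Z + i%:Z)) (runner_of i B) (runner_of i B').
Proof.
move=> bB bB'; have [L [U [h h']]] := betaset_within2 bB bB'.
pose L' := - (absz L)%:Z; pose U' := (absz U)%:Z.
have g : within B (L' * m%:Z) (U' * m%:Z) by apply: within_widen h _ _; nia.
have g' : within B' (L' * m%:Z) (U' * m%:Z) by apply: within_widen h' _ _; nia.
rewrite (wdiff_within _ g g').
have -> : absz (U' * m%:Z - L' * m%:Z)%R = (absz (U' - L')%R * m)%N by nia.
rewrite /wdiff_on big_window_mul exchange_big /=; apply: eq_bigr => i _.
by rewrite (wdiff_within _ (within_runner_of (ltn_ord i) h) (within_runner_of (ltn_ord i) h')).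
Qed.

End Runners.

Lemma Posz_sum I (r : seq I) (P : pred I) (F : I -> nat) :
  (\sum_(i <- r | P i) F i)%:Z = \sum_(i <- r | P i) (F i)%:Z.
Proof. exact: (big_morph Posz PoszD). Qed.

Definition beta_seq (s : int) (l : seq nat) : int -> Prop :=
  fun b => exists i : nat, (0 < i)%N /\ b = (nth 0%N l i.-1)%:Z - i%:Z + s.

Lemma beta_seq_nil s : beta_seq s [::] = vacuum s.
Proof.
apply: predext => b; rewrite /vacuum; split; first by case=> i [hi ->]; rewrite nth_nil; lia.
by move=> hb; exists (absz (s - b))%R; rewrite nth_nil; split; lia.
Qed.

Lemma beta_seq_cons s x l : beta_seq s (x :: l) = add_point (beta_seq (s - 1) l) (x%:Z - 1 + s).
Proof.
apply: predext => b; split.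
  case=> [[|[|i]]] [hi ->] //=; first by right.
  by left; exists i.+1; split => //=; lia.
case=> [[i [hi ->]]|->]; last by exists 1%N.
by exists i.+1; split => //; case: i hi => //= i _; lia.
Qed.

Lemma betaset_beta_seq s l : is_betaset (beta_seq s l).
Proof.
elim: l s => [|x l IH] s; first by rewrite beta_seq_nil; apply: betaset_vacuum.
by rewrite beta_seq_cons; apply: betaset_add_point.
Qed.

Lemma is_part_cons x l : is_part (x :: l) -> [/\ is_part l, (head 0%N l <= x)%N & (0 < x)%N].
Proof.
case/andP=> h1 /andP[h2 h3]; split=> //; first by apply/andP; split; [exact: path_sorted h1|].
by case: l h1 {h3} => //= y l /andP[].
Qed.

Lemma beta_seq_lt s l : sorted geq l -> forall b, beta_seq s l b -> b < (head 0%N l)%:Z + s.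
Proof.
elim: l s => [|x l IH] s hs b; first by rewrite beta_seq_nil /vacuum /=; lia.
rewrite beta_seq_cons => -[hb|->] /=; last by lia.
have := IH _ (path_sorted hs) _ hb.
suff : (head 0%N l <= x)%N by lia.
by case: l hs {IH hb} => //= y l /andP[].
Qed.

Lemma wdiff_beta_seq f s l : is_part l ->
  wdiff f (beta_seq s l) (vacuum s) =
  \sum_(i < size l) (f ((nth 0%N l i)%:Z - i.+1%:Z + s) - f (s - i.+1%:Z)).
Proof.
elim: l s => [|x l IH] s hl; first by rewrite beta_seq_nil big_ord0 wdiffii.
have [hl' hx _] := is_part_cons hl.
have bB := betaset_beta_seq (s - 1) l; have bv := betaset_vacuum.
have fresh : ~ beta_seq (s - 1) l (x%:Z - 1 + s).
  by move=> /(beta_seq_lt (proj1 (andP hl'))); lia.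
rewrite beta_seq_cons (wdiff_trans f (betaset_add_point _ bB) bB (bv s)).
rewrite wdiff_add_point // (wdiff_trans f bB (bv (s - 1)) (bv s)) IH //.
rewrite (wdiff_sym f (bv _) (bv _)) -[in vacuum s](subrK 1 s) wdiff_vacuumS.
rewrite big_ord_recl /= -/(size l).
set S := \sum_(i < size l) _; set S' := \sum_(i < size l) _.
have -> : S' = S.
  apply: eq_bigr => i _; rewrite /bump leq0n add1n add0n.
  have -> : i.+2%:Z = i.+1%:Z + 1 by rewrite -[in LHS]addn1 PoszD.
  by congr (f _ - f _); ring.
ring.
Qed.

Lemma charge_beta_seq s l : is_part l -> charge (beta_seq s l) = s.
Proof.
move=> hl; rewrite /charge.
rewrite (wdiff_trans _ (betaset_beta_seq s l) (betaset_vacuum s) (betaset_vacuum 0)).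
rewrite -/(charge _) charge_vacuum wdiff_beta_seq //.
by rewrite big1 ?add0r // => i _; rewrite subrr.
Qed.

Lemma size_beta_seq s l : is_part l -> wdiff id (beta_seq s l) (vacuum s) = (sumn l)%:Z.
Proof.
move=> hl; rewrite wdiff_beta_seq // sumnE Posz_sum (big_nth 0%N) big_mkord.
by apply: eq_bigr => i _; ring.
Qed.

Lemma beta_seq_top s l : beta_seq s l ((head 0%N l)%:Z - 1 + s).
Proof. by exists 1%N; case: l. Qed.

Lemma add_point_beta_seq s l x : is_part l -> (head 0%N l)%:Z + s <= x ->
  exists l', is_part l' /\ add_point (beta_seq s l) x = beta_seq (s + 1) l'.
Proof.
move=> hl; case: (eqVneq x s) => [->|nxs] hx.
  have -> : l = [::] by case: l hl hx => // y l /is_part_cons[_ _ hy] /=; lia.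
  exists [::]; rewrite !beta_seq_nil; split=> //.
  by apply: predext => z; rewrite /add_point /vacuum; lia.
exists (absz (x - s)%R :: l); split.
  case/andP: hl => hs hp; rewrite /is_part /= hp andbT.
  by case: l hs hp hx => [|y l] /= hs _ hx; [|rewrite hs andbT]; lia.
by rewrite beta_seq_cons addrK; congr add_point; lia.
Qed.

Lemma beta_seq_of_within B L (N : nat) : within B L (L + N%:Z) ->
  exists s l, is_part l /\ beta_seq s l = B.
Proof.
elim: N B => [|N IH] B hB.
  exists L, [::]; split=> //; rewrite beta_seq_nil; apply: predext => z; rewrite /vacuum.
  case: hB => H1 H2; split=> [|Bz]; first exact: H1.
  by case: (ltrP z L) => // hz; case: (H2 z _ Bz); lia.
pose x := L + N%:Z.
have [Bx|nBx] := classic (B x); last first.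
  apply: IH; case: hB => H1 H2; split=> // z hz Bz.
  have [ezx|nzx] := eqVneq z x; first by rewrite ezx in Bz.
  by apply: (H2 z) => //; rewrite /x in nzx *; lia.
pose B' := fun z => B z /\ z <> x.
have hB' : within B' L x.
  case: hB => H1 H2; split=> z hz; first by split; [apply: H1 | rewrite /x; lia].
  by case=> Bz nzx; apply: (H2 z _ Bz); rewrite /x in nzx hz *; lia.
have [s [l [hl eqB']]] := IH B' hB'.
have top_lt : (head 0%N l)%:Z + s <= x.
  case: (ltrP ((head 0%N l)%:Z - 1 + s) x) => [|hx]; first by lia.
  by case: (proj2 hB' _ hx); rewrite -eqB'; apply: beta_seq_top.
have [l' [hl' eqB]] := add_point_beta_seq hl top_lt.
exists (s + 1), l'; split=> //; rewrite -eqB eqB'; apply: predext => z.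
by split; [case=> [[]|->] | move=> Bz; have [->|/eqP] := eqVneq z x; [right | left]].
Qed.

Lemma betaset_beta_seq_of B : is_betaset B -> exists s l, is_part l /\ beta_seq s l = B.
Proof.
move=> [L [U hB]]; apply: (@beta_seq_of_within _ L (absz (U - L)%R)).
by apply: within_widen hB _ _; lia.
Qed.

Lemma beta_seq_behead s x l : is_part (x :: l) ->
  beta_seq (s - 1) l = fun b => beta_seq s (x :: l) b /\ b <> x%:Z - 1 + s.
Proof.
move=> /is_part_cons[/andP[hl _] hx _]; apply: predext => b; rewrite beta_seq_cons.
split; last by case=> -[|->].
by move=> hb; split; [left | move: (beta_seq_lt hl hb); lia].
Qed.

Lemma beta_seq_inj s s' l l' : is_part l -> is_part l' -> beta_seq s l = beta_seq s' l' ->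
  s = s' /\ l = l'.
Proof.
move=> hl hl' eqB.
have ess : s = s' by rewrite -(charge_beta_seq s hl) -(charge_beta_seq s' hl') eqB.
subst s'; split=> //; elim: l s l' hl hl' eqB => [|x l IH] s [|y l'] hl hl' eqB //.
- have := beta_seq_top s (y :: l'); rewrite -eqB beta_seq_nil /vacuum.
  by case/is_part_cons: hl' => _ _ /=; lia.
- have := beta_seq_top s (x :: l); rewrite eqB beta_seq_nil /vacuum.
  by case/is_part_cons: hl => _ _ /=; lia.
have exy : x = y.
  have mx := beta_seq_top s (x :: l); have my := beta_seq_top s (y :: l').
  rewrite eqB in mx; rewrite -eqB in my.
  by move: (beta_seq_lt (proj1 (andP hl')) mx) (beta_seq_lt (proj1 (andP hl)) my) => /=; lia.
subst y; congr (_ :: _); apply: (IH (s - 1)); try by case/is_part_cons: hl; case/is_part_cons: hl'.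
by rewrite (beta_seq_behead s hl) (beta_seq_behead s hl') eqB.
Qed.

Lemma betaE s la : beta s la = beta_seq s (sval la).
Proof. by []. Qed.

Lemma betaset_beta s la : is_betaset (beta s la).
Proof. by rewrite betaE; apply: betaset_beta_seq. Qed.

Lemma charge_beta s la : charge (beta s la) = s.
Proof. by rewrite betaE charge_beta_seq //; exact: (svalP la). Qed.

Lemma psize_beta s la : (psize la)%:Z = wdiff id (beta s la) (vacuum s).
Proof. by rewrite betaE size_beta_seq //; exact: (svalP la). Qed.

Lemma beta_addr s m la : beta (s + m) la = shift m (beta s la).
Proof.
apply: predext => b; rewrite /shift; split; case=> i [hi hb]; exists i; split => //.
  by rewrite hb; ring.
by rewrite -[b](subrK m) hb; ring.
Qed.

Lemma beta_inj (c c' : conf) : beta c.2 c.1 = beta c'.2 c'.1 -> c = c'.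
Proof.
case: c => [[l hl] s]; case: c' => [[l' hl'] s'] /= /(beta_seq_inj hl hl')[-> el].
by subst l'; rewrite (eq_irrelevance hl hl').
Qed.

Lemma beta_inv_spec B : is_betaset B -> beta (beta_inv B).2 (beta_inv B).1 = B.
Proof.
move=> /betaset_beta_seq_of[s [l [hl eqB]]]; apply: predext.
apply: (epsilon_spec conf_inhabited (fun p : conf => forall b, beta p.2 p.1 b <-> B b)).
by exists (exist _ l hl, s) => b; rewrite -eqB.
Qed.

Lemma beta_invK s la : beta_inv (beta s la) = (la, s).
Proof. by apply: beta_inj; apply: beta_inv_spec; apply: betaset_beta. Qed.

Lemma divzS_sub (w d : int) : 0 < d -> ((w + 1) %/ d)%Z - (w %/ d)%Z = (d %| w + 1)%Z%:Z.
Proof.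
move=> hd; set q := ((w + 1) %/ d)%Z; set p := ((w + 1) %% d)%Z.
have hp : 0 <= p < d by rewrite modz_ge0 ?gt_eqF //= ltz_pmod.
have hw : w + 1 = q * d + p by rewrite /q /p -divz_eq.
case: (eqVneq p 0) => [p0|pn0].
  have -> : (w %/ d)%Z = q - 1.
    by apply: (proj1 (@divz_modz_unique d (q - 1) (d - 1) w hd _ _)); lia.
  by rewrite (introT dvdz_mod0P p0) opprB addrC subrK.
have -> : (w %/ d)%Z = q by apply: (proj1 (@divz_modz_unique d q (p - 1) w hd _ _)); lia.
by case: dvdz_mod0P => [p0|_]; [case/negP: pn0; apply/eqP | rewrite subrr].
Qed.

Section Residues.

Variable e : nat.

Definition level (j : nat) (z : int) : int := ((z - j%:Z) %/ e%:Z)%Z.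

Lemma levelS j z : (j < e)%N -> level j (z + 1) - level j z = (((z + 1) %% e%:Z)%Z == j%:Z)%:Z.
Proof.
move=> hj; rewrite /level addrAC divzS_sub; last by lia.
by rewrite addrAC -eqz_mod_dvd [(j%:Z %% _)%Z]modz_small //; lia.
Qed.

Lemma level_runner j a i : (j < e)%N -> (i < e)%N ->
  level j (a * e%:Z + i%:Z) = a - (i < j)%N%:Z.
Proof.
move=> hj hi; rewrite /level; have he : 0 < e%:Z by lia.
case: (ltnP i j) => hij /=.
  by apply: (proj1 (@divz_modz_unique _ (a - 1) (i%:Z - j%:Z + e%:Z) _ he _ _)); lia.
by rewrite subr0; apply: (proj1 (@divz_modz_unique _ a (i%:Z - j%:Z) _ he _ _)); lia.
Qed.

Lemma residues_row j (c : int) (n : nat) : (j < e)%N ->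
  (\sum_(1 <= b < n.+1) (((c + b%:Z) %% e%:Z)%Z == j%:Z : nat))%:Z =
  level j (c + n%:Z) - level j c.
Proof.
move=> hj; elim: n => [|n IH]; first by rewrite big_geq // addr0 subrr.
rewrite big_nat_recr //= PoszD IH -[n.+1]addn1 PoszD addrA -(levelS _ hj); ring.
Qed.

Lemma res_count_single c j : (j < e)%N ->
  (res_count e 1 (single c) j)%:Z = wdiff (level j) (beta c.2 c.1) (vacuum c.2).
Proof.
move=> hj; case: c => [[l hl] s] /=.
rewrite betaE wdiff_beta_seq // /res_count big_ord1 big_add1 /= big_mkord Posz_sum.
apply: eq_bigr => i _; rewrite /part /=.
under eq_bigr => b _ do rewrite addrAC.
by rewrite residues_row //; congr (level j _ - _); ring.
Qed.

End Residues.

Section Abacus.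

Variable e : nat.
Hypothesis e_gt0 : (0 < e)%N.

Lemma betaset_runner c i : (i < e)%N -> is_betaset (runner e c i).
Proof. by move=> hi; apply: betaset_runner_of => //; apply: betaset_beta. Qed.

Lemma beta_eta c i : (i < e)%N ->
  beta (eta_t e c i) (eta_rho e c i) = runner_of e i (beta c.2 c.1).
Proof. by move=> hi; apply: beta_inv_spec; apply: betaset_runner. Qed.

Lemma eta_tE c i : (i < e)%N -> eta_t e c i = charge (runner_of e i (beta c.2 c.1)).
Proof. by move=> hi; rewrite -beta_eta // charge_beta. Qed.

Lemma psize_eta_rho c i : (i < e)%N ->
  (psize (eta_rho e c i))%:Z = wdiff id (runner_of e i (beta c.2 c.1)) (vacuum (eta_t e c i)).
Proof. by move=> hi; rewrite (psize_beta (eta_t e c i)) beta_eta. Qed.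

Lemma wtE c : (wt e c)%:Z = \sum_(i < e)
  wdiff id (runner_of e i (beta c.2 c.1)) (vacuum (charge (runner_of e i (beta c.2 c.1)))).
Proof. by rewrite /wt Posz_sum; apply: eq_bigr => i _; rewrite psize_eta_rho // eta_tE. Qed.

Definition stretch_set (Mv : nat -> int) (B : int -> Prop) : int -> Prop :=
  fun b => B (b - Mv (absz (b %% e%:Z)%Z) * e%:Z).

Lemma runner_of_stretch_set Mv B i : (i < e)%N ->
  runner_of e i (stretch_set Mv B) = shift (Mv i) (runner_of e i B).
Proof.
move=> hi; apply: predext => a; rewrite /runner_of /shift /stretch_set.
have [_ ->] := divz_modz_runner a hi; rewrite absz_nat.
by have -> : a * e%:Z + i%:Z - Mv i * e%:Z = (a - Mv i) * e%:Z + i%:Z by ring.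
Qed.

Lemma betaset_stretch_set Mv B : is_betaset B -> is_betaset (stretch_set Mv B).
Proof.
move=> bB; apply: (betaset_runners e_gt0) => i hi; rewrite runner_of_stretch_set //.
by apply: betaset_shift; apply: betaset_runner_of.
Qed.

Lemma eta_pair c i : (eta_rho e c i, eta_t e c i) = beta_inv (runner_of e i (beta c.2 c.1)).
Proof. by rewrite /eta_rho /eta_t; case: beta_inv. Qed.

Lemma beta_str c Mv : beta (str e c Mv).2 (str e c Mv).1 = stretch_set Mv (beta c.2 c.1).
Proof.
set S := stretch_set Mv (beta c.2 c.1).
have runner_S i : (i < e)%N -> runner_of e i S = beta (eta_t e c i + Mv i) (eta_rho e c i).
  by move=> hi; rewrite runner_of_stretch_set // beta_addr beta_eta.
have str_spec i : (i < e)%N ->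
    eta_rho e (str e c Mv) i = eta_rho e c i /\ eta_t e (str e c Mv) i = eta_t e c i + Mv i.
  move: i; apply: (epsilon_spec conf_inhabited (fun c' => forall i, (i < e)%N ->
    eta_rho e c' i = eta_rho e c i /\ eta_t e c' i = eta_t e c i + Mv i)).
  exists (beta_inv S) => i hi; have := eta_pair (beta_inv S) i.
  rewrite beta_inv_spec; last by apply: betaset_stretch_set; apply: betaset_beta.
  by rewrite runner_S // beta_invK; case.
apply: (runner_of_ext e_gt0) => i hi.
by rewrite -beta_eta // runner_S //; case: (str_spec i hi) => -> ->.
Qed.

End Abacus.

Section Uglov.

Variables e r : nat.
Hypotheses (e_gt0 : (0 < e)%N) (r_gt0 : (0 < r)%N).

Definition uglov_set (A : 'I_r -> int -> Prop) : int -> Prop :=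
  fun b => exists (k : 'I_r) (b' : int), A k b' /\ b = psi e r k.+1 b'.

Definition mbeta (x : mconf r) (k : 'I_r) : int -> Prop := beta (x.2 k) (x.1 k).

Lemma psi_runner k a i : (i < e)%N ->
  psi e r k (a * e%:Z + i%:Z) = ((a + 1) * r%:Z - k%:Z) * e%:Z + i%:Z.
Proof. by move=> hi; rewrite /psi; case: (divz_modz_runner a hi) => -> ->. Qed.

Lemma runner_of_uglov_set A i (rho : 'I_r) : (i < e)%N ->
  runner_of r rho (runner_of e i (uglov_set A)) = runner_of e i (A (rev_ord rho)).
Proof.
move=> hi; set k := rev_ord rho; have hk : (k + rho).+1 = r by rewrite /=; have := ltn_ord rho; lia.
apply: predext => q; rewrite /runner_of /uglov_set; split; last first.
  move=> Ak; exists k, (q * e%:Z + i%:Z); split=> //.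
  by rewrite psi_runner //; congr (_ * _ + _); lia.
case=> k' [b' [Ab' eqb]]; have [a [i' [hi' eb']]] := int_euclid e_gt0 b'.
rewrite eb' psi_runner // in eqb.
have [dq mq] := divz_modz_runner (q * r%:Z + rho%:Z) hi.
have [dk mk] := divz_modz_runner ((a + 1) * r%:Z - k'.+1%:Z) hi'.
rewrite eqb dk in dq; rewrite eqb mk in mq; have := ltn_ord k' => hk'.
have ei : i' = i by lia.
have ea : a = q by nia.
have ek : k' = k by apply: val_inj => /=; nia.
by rewrite -ek -ea -ei -eb'.
Qed.

Lemma betaset_uglov_set A : (forall k, is_betaset (A k)) -> is_betaset (uglov_set A).
Proof.
move=> bA; apply: (betaset_runners e_gt0) => i hi; apply: (betaset_runners r_gt0) => rho hrho.
by rewrite -[rho]/(nat_of_ord (Ordinal hrho)) runner_of_uglov_set //; apply: betaset_runner_of.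
Qed.

Lemma mbeta_mstr x Mv : mbeta (mstr e r x Mv) = fun k => stretch_set e Mv (mbeta x k).
Proof. by apply: functional_extensionality => k; rewrite /mbeta /mstr /= beta_str. Qed.

Lemma runner_of_shift_mul rho m B : (rho < r)%N ->
  runner_of r rho (shift (m * r%:Z) B) = shift m (runner_of r rho B).
Proof.
move=> hrho; apply: predext => q; rewrite /runner_of /shift.
by have -> : q * r%:Z + rho%:Z - m * r%:Z = (q - m) * r%:Z + rho%:Z by ring.
Qed.

Lemma runner_of_uglov_mstr x Mv i : (i < e)%N ->
  runner_of e i (uglov_set (mbeta (mstr e r x Mv))) =
  shift (Mv i * r%:Z) (runner_of e i (uglov_set (mbeta x))).
Proof.
move=> hi; apply: (runner_of_ext r_gt0) => rho hrho.
rewrite runner_of_shift_mul // -[rho]/(nat_of_ord (Ordinal hrho)) !runner_of_uglov_set //.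
by rewrite mbeta_mstr runner_of_stretch_set.
Qed.

End Uglov.

Section PrefixSums.

Variable e : nat.

Let prefix (f : nat -> int) (j : nat) : int := \sum_(i < e) (i < j)%N%:Z * f i.

Lemma prefixS f j : (j < e)%N -> prefix f j.+1 - prefix f j = f j.
Proof.
move=> hj; rewrite /prefix -sumrB (bigD1 (Ordinal hj)) //= ltnSn ltnn mul1r mul0r subr0.
rewrite big1 ?addr0 // => i /eqP ni; rewrite -mulrBl ltnS leq_eqVlt.
have /negbTE -> : (i != j :> nat) by apply/eqP => eij; apply: ni; apply: val_inj.
by rewrite subrr mul0r.
Qed.

Lemma prefix_sums_inj (a d a' d' : nat -> int) :
  (forall j, (j < e)%N -> \sum_(i < e) (a i - (i < j)%N%:Z * d i) =
                         \sum_(i < e) (a' i - (i < j)%N%:Z * d' i)) ->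
  \sum_(i < e) d i = \sum_(i < e) d' i ->
  \sum_(i < e) a i = \sum_(i < e) a' i /\ forall i, (i < e)%N -> d i = d' i.
Proof.
move=> H Hd; have splitE (f g : nat -> int) j :
    \sum_(i < e) (f i - (i < j)%N%:Z * g i) = \sum_(i < e) f i - prefix g j by rewrite sumrB.
have prefix0 f : prefix f 0 = 0 by rewrite /prefix big1 // => i _; rewrite mul0r.
have prefixE f : prefix f e = \sum_(i < e) f i.
  by apply: eq_bigr => i _; rewrite ltn_ord mul1r.
have [e0|e_gt0] := posnP e; first by subst e; rewrite !big_ord0.
have Ha : \sum_(i < e) a i = \sum_(i < e) a' i.
  by have := H 0%N e_gt0; rewrite !splitE !prefix0 !subr0.
have Hp j : (j <= e)%N -> prefix d j = prefix d' j.
  rewrite leq_eqVlt => /orP[/eqP->|hj]; first by rewrite !prefixE.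
  by move: (H j hj); rewrite !splitE Ha => /addrI /oppr_inj.
by split=> // i hi; rewrite -(prefixS d hi) -(prefixS d' hi) !Hp // ltnW.
Qed.

End PrefixSums.

Lemma norm_le_sum_norm (n : nat) (F : nat -> int) j : (j < n)%N -> `|F j| <= \sum_(i < n) `|F i|.
Proof.
move=> hj; rewrite (bigD1 (Ordinal hj)) //= lerDl.
by apply: sumr_ge0 => i _; apply: normr_ge0.
Qed.

Section SingleBlocks.

Variable e : nat.
Hypothesis e_gt0 : (0 < e)%N.

Definition rel_size (c : conf) (i : nat) : int :=
  wdiff id (runner_of e i (beta c.2 c.1)) (runner_of e i (vacuum c.2)).

Definition rel_charge (c : conf) (i : nat) : int :=
  wdiff (fun _ => 1) (runner_of e i (beta c.2 c.1)) (runner_of e i (vacuum c.2)).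

Lemma res_count_rel c j : (j < e)%N ->
  (res_count e 1 (single c) j)%:Z = \sum_(i < e) (rel_size c i - (i < j)%N%:Z * rel_charge c i).
Proof.
move=> hj; rewrite res_count_single //.
rewrite (wdiff_runners e_gt0 _ (betaset_beta _ _) (betaset_vacuum _)).
apply: eq_bigr => i _; rewrite (@eq_wdiff _ (fun a => 1 * a + - (i < j)%N%:Z)) => [|a].
  by rewrite wdiff_affine mul1r mulNr.
by rewrite level_runner // mul1r.
Qed.

Lemma sum_rel_charge c : \sum_(i < e) rel_charge c i = 0.
Proof.
rewrite -(wdiff_runners e_gt0 (fun _ => 1) (betaset_beta c.2 c.1) (betaset_vacuum c.2)).
rewrite charge_diff ?charge_beta ?charge_vacuum ?subrr //.
  exact: betaset_beta.
exact: betaset_vacuum.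
Qed.

Lemma eta_t_rel_charge c i : (i < e)%N ->
  eta_t e c i = rel_charge c i + charge (runner_of e i (vacuum c.2)).
Proof.
move=> hi; rewrite /rel_charge charge_diff ?subrK ?eta_tE //.
  exact: betaset_runner_of (betaset_beta _ _).
exact: betaset_runner_of (betaset_vacuum _).
Qed.

Lemma wt_rel_size c : (wt e c)%:Z = \sum_(i < e) rel_size c i -
  \sum_(i < e) wdiff id (vacuum (eta_t e c i)) (runner_of e i (vacuum c.2)).
Proof.
rewrite wtE -sumrB; apply: eq_bigr => i _; rewrite /rel_size eta_tE //.
have hi := ltn_ord i.
set t := charge _.
rewrite (wdiff_trans id (betaset_runner_of hi (betaset_beta c.2 c.1)) (betaset_vacuum t)
  (betaset_runner_of hi (betaset_vacuum c.2))).
by rewrite addrK.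
Qed.

Lemma mequiv1_eta c c' : mequiv e 1 (single c) (single c') ->
  (forall i, (i < e)%N -> eta_t e c i = eta_t e c' i) /\ wt e c = wt e c'.
Proof.
move=> [Hs [_ Hres]]; have es : c'.2 = c.2 by have := Hs ord0.
have Hrel j : (j < e)%N ->
    \sum_(i < e) (rel_size c i - (i < j)%N%:Z * rel_charge c i) =
    \sum_(i < e) (rel_size c' i - (i < j)%N%:Z * rel_charge c' i).
  by move=> hj; rewrite -!res_count_rel // (Hres (Ordinal hj)).
have [Hsize Hcharge] := prefix_sums_inj Hrel (etrans (sum_rel_charge c) (esym (sum_rel_charge c'))).
have Ht i : (i < e)%N -> eta_t e c i = eta_t e c' i.
  by move=> hi; rewrite !eta_t_rel_charge // Hcharge // es.
split=> //; apply/eqP; rewrite -eqz_nat; apply/eqP; rewrite !wt_rel_size Hsize es.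
by congr (_ - _); apply: eq_bigr => i _; rewrite Ht.
Qed.

End SingleBlocks.

Section UglovBlocks.

Variables e r : nat.
Hypotheses (e_gt0 : (0 < e)%N) (r_gt0 : (0 < r)%N).

Definition mcomp (x : mconf r) (k : 'I_r) : conf := (x.1 k, x.2 k).

Definition uglov_str (x : mconf r) (Mv : nat -> int) : int -> Prop :=
  uglov_set e (mbeta (mstr e r x Mv)).

Definition uglov_vacuum (x : mconf r) (Mv : nat -> int) : int -> Prop :=
  uglov_set e (fun k => stretch_set e Mv (vacuum (x.2 k))).

Lemma betaset_uglov_str x Mv : is_betaset (uglov_str x Mv).
Proof.
rewrite /uglov_str (mbeta_mstr e_gt0); apply: (betaset_uglov_set e_gt0 r_gt0) => k.
by apply: (betaset_stretch_set e_gt0); apply: betaset_beta.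
Qed.

Lemma betaset_uglov_vacuum x Mv : is_betaset (uglov_vacuum x Mv).
Proof.
apply: (betaset_uglov_set e_gt0 r_gt0) => k.
by apply: (betaset_stretch_set e_gt0); apply: betaset_vacuum.
Qed.

Lemma wdiff_uglov_runner x Mv (al be : int) i : (i < e)%N ->
  wdiff (fun a => al * a + be)
    (runner_of e i (uglov_str x Mv)) (runner_of e i (uglov_vacuum x Mv)) =
  \sum_(k < r) (al * r%:Z * rel_size e (mcomp x k) i +
                (al * (Mv i * r%:Z + (r - k.+1)%N%:Z) + be) * rel_charge e (mcomp x k) i).
Proof.
move=> hi; rewrite (wdiff_runners r_gt0); last 2 first.
- exact: betaset_runner_of (betaset_uglov_str x Mv).
- exact: betaset_runner_of (betaset_uglov_vacuum x Mv).
rewrite (reindex_inj rev_ord_inj); apply: eq_bigr => k _.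
rewrite /uglov_str /uglov_vacuum !runner_of_uglov_set // rev_ordK (mbeta_mstr e_gt0).
rewrite !runner_of_stretch_set // wdiff_shift; last 2 first.
- exact: betaset_runner_of (betaset_beta _ _).
- exact: betaset_runner_of (betaset_vacuum _).
rewrite (@eq_wdiff _ (fun q => al * r%:Z * q + (al * (Mv i * r%:Z + (r - k.+1)%N%:Z) + be))).
  by rewrite wdiff_affine.
by move=> q /=; ring.
Qed.

Definition runner_affine (f : int -> int) : Prop := exists (al : int) (be : nat -> int),
  forall q i, (i < e)%N -> f (q * e%:Z + i%:Z) = al * q + be i.

Definition msize_at (x : mconf r) (i : nat) : int := \sum_(k < r) rel_size e (mcomp x k) i.
Definition mcharge_at (x : mconf r) (i : nat) : int := \sum_(k < r) rel_charge e (mcomp x k) i.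

Lemma res_count_mcomp x j :
  res_count e r x j = (\sum_(k < r) res_count e 1 (single (mcomp x k)) j)%N.
Proof. by rewrite /res_count; apply: eq_bigr => k _; rewrite big_ord1. Qed.

Lemma res_count_msize_at x j : (j < e)%N ->
  (res_count e r x j)%:Z = \sum_(i < e) (msize_at x i - (i < j)%N%:Z * mcharge_at x i).
Proof.
move=> hj; rewrite res_count_mcomp Posz_sum.
under eq_bigr => k _ do rewrite res_count_rel //.
rewrite exchange_big /=; apply: eq_bigr => i _.
by rewrite /msize_at /mcharge_at mulr_sumr -sumrB.
Qed.

Lemma sum_mcharge_at x : \sum_(i < e) mcharge_at x i = 0.
Proof. by rewrite exchange_big /= big1 // => k _; apply: sum_rel_charge. Qed.

Lemma wdiff_uglov x Mv f (al : int) (be : nat -> int) :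
  (forall q i, (i < e)%N -> f (q * e%:Z + i%:Z) = al * q + be i) ->
  wdiff f (uglov_str x Mv) (uglov_vacuum x Mv) =
  al * r%:Z * \sum_(i < e) msize_at x i + \sum_(i < e) (al * (Mv i * r%:Z) + be i) * mcharge_at x i.
Proof.
move=> hf; rewrite (wdiff_runners e_gt0 _ (betaset_uglov_str x Mv) (betaset_uglov_vacuum x Mv)).
have runner_term (i : 'I_e) :
    wdiff (fun a => f (a * e%:Z + i%:Z)) (runner_of e i (uglov_str x Mv))
      (runner_of e i (uglov_vacuum x Mv)) =
    al * r%:Z * msize_at x i + (al * (Mv i * r%:Z) + be i) * mcharge_at x i +
    \sum_(k < r) al * (r - k.+1)%N%:Z * rel_charge e (mcomp x k) i.
  rewrite (@eq_wdiff _ (fun a => al * a + be i)) => [|a]; last exact: hf.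
  rewrite wdiff_uglov_runner // /msize_at /mcharge_at !mulr_sumr -!big_split.
  by apply: eq_bigr => k _ /=; ring.
rewrite (eq_bigr _ (fun i _ => runner_term i)) !big_split /= -mulr_sumr -[RHS]addr0.
congr (_ + _); rewrite exchange_big big1 // => k _.
by rewrite -mulr_sumr sum_rel_charge // mulr0.
Qed.

Lemma wdiff_uglov_block x x' Mv f : runner_affine f -> mequiv e r x x' ->
  wdiff f (uglov_str x Mv) (uglov_vacuum x Mv) = wdiff f (uglov_str x' Mv) (uglov_vacuum x' Mv).
Proof.
move=> [al [be hf]] [_ [_ Hres]]; rewrite !(wdiff_uglov _ _ hf).
have Hrel j : (j < e)%N ->
    \sum_(i < e) (msize_at x i - (i < j)%N%:Z * mcharge_at x i) =
    \sum_(i < e) (msize_at x' i - (i < j)%N%:Z * mcharge_at x' i).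
  by move=> hj; rewrite -!res_count_msize_at // (Hres (Ordinal hj)).
have [Hsize Hcharge] := prefix_sums_inj Hrel (etrans (sum_mcharge_at x) (esym (sum_mcharge_at x'))).
by rewrite Hsize; congr (_ + _); apply: eq_bigr => i _; rewrite Hcharge.
Qed.

Lemma beta_Psi_mstr x Mv :
  beta (Psi e r (mstr e r x Mv)).2 (Psi e r (mstr e r x Mv)).1 = uglov_str x Mv.
Proof. exact: beta_inv_spec (betaset_uglov_str x Mv). Qed.

Lemma charge_Psi_mstr x Mv : (Psi e r (mstr e r x Mv)).2 = charge (uglov_str x Mv).
Proof. by rewrite -beta_Psi_mstr charge_beta. Qed.

Lemma uglov_vacuum_block x x' Mv : mequiv e r x x' -> uglov_vacuum x Mv = uglov_vacuum x' Mv.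
Proof.
by move=> [Hs _]; congr uglov_set; apply: functional_extensionality => k; rewrite Hs.
Qed.

Lemma charge_Psi_mstr_block x x' Mv : mequiv e r x x' ->
  (Psi e r (mstr e r x Mv)).2 = (Psi e r (mstr e r x' Mv)).2.
Proof.
move=> Hx; rewrite !charge_Psi_mstr; apply: (@addIr _ (- charge (uglov_vacuum x Mv))).
rewrite {2}(uglov_vacuum_block Mv Hx) -!charge_diff.
- by apply: wdiff_uglov_block Hx; exists 0, (fun _ => 1) => q i _; ring.
all: by [apply: betaset_uglov_str | apply: betaset_uglov_vacuum].
Qed.

Lemma wdiff_Psi_mstr_block x x' Mv f : runner_affine f -> mequiv e r x x' ->
  let P := Psi e r (mstr e r x Mv) in let P' := Psi e r (mstr e r x' Mv) in
  wdiff f (beta P.2 P.1) (vacuum P.2) = wdiff f (beta P'.2 P'.1) (vacuum P'.2).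
Proof.
move=> hf Hx P P'; rewrite /P /P' !beta_Psi_mstr -(charge_Psi_mstr_block Mv Hx).
set s := (Psi e r _).2; have bv := betaset_vacuum s.
rewrite (wdiff_trans f (betaset_uglov_str x Mv) (betaset_uglov_vacuum x Mv) bv).
rewrite (wdiff_trans f (betaset_uglov_str x' Mv) (betaset_uglov_vacuum x' Mv) bv).
by rewrite (wdiff_uglov_block Mv hf Hx) (uglov_vacuum_block Mv Hx).
Qed.

Lemma Psi_mstr_block x x' Mv : mequiv e r x x' ->
  mequiv e 1 (single (Psi e r (mstr e r x Mv))) (single (Psi e r (mstr e r x' Mv))).
Proof.
move=> Hx; split; first by move=> k /=; apply: charge_Psi_mstr_block.
split.
  apply/eqP; rewrite /msize !big_ord1 -eqz_nat /=.
  rewrite (psize_beta (Psi e r (mstr e r x Mv)).2) (psize_beta (Psi e r (mstr e r x' Mv)).2).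
  apply/eqP.
  by apply: wdiff_Psi_mstr_block Hx; exists e%:Z, (fun i => i%:Z) => q i _; rewrite mulrC.
move=> j; apply/eqP; rewrite -eqz_nat !res_count_single //; apply/eqP.
apply: wdiff_Psi_mstr_block Hx; exists 1, (fun i => - (i < j)%N%:Z) => q i hi.
by rewrite level_runner // mul1r.
Qed.

Definition uglov_runner (x : mconf r) (i : nat) : int -> Prop :=
  runner_of e i (uglov_set e (mbeta x)).

Lemma betaset_uglov_runner x i : (i < e)%N -> is_betaset (uglov_runner x i).
Proof.
move=> hi; apply: betaset_runner_of hi _; apply: (betaset_uglov_set e_gt0 r_gt0) => k.
exact: betaset_beta.
Qed.

Lemma runner_Psi_mstr x Mv i : (i < e)%N ->
  runner_of e i (beta (Psi e r (mstr e r x Mv)).2 (Psi e r (mstr e r x Mv)).1) =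
  shift (Mv i * r%:Z) (uglov_runner x i).
Proof. by move=> hi; rewrite beta_Psi_mstr /uglov_str runner_of_uglov_mstr. Qed.

Lemma eta_t_Psi_mstr x Mv i : (i < e)%N ->
  eta_t e (Psi e r (mstr e r x Mv)) i = charge (uglov_runner x i) + Mv i * r%:Z.
Proof.
by move=> hi; rewrite eta_tE // runner_Psi_mstr // charge_shift //; apply: betaset_uglov_runner.
Qed.

Lemma wt_Psi_mstr x Mv : (wt e (Psi e r (mstr e r x Mv)))%:Z =
  \sum_(i < e) wdiff id (uglov_runner x i) (vacuum (charge (uglov_runner x i))).
Proof.
rewrite wtE //; apply: eq_bigr => i _.
by rewrite runner_Psi_mstr // wdiff_id_shift //; apply: betaset_uglov_runner.
Qed.

Lemma Rouquier_Psi_mstr x : exists Mstar : int, forall M, Mstar <= M ->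
  Rouquier e (Psi e r (mstr e r x (fun i => i%:Z * M))).
Proof.
pose W := \sum_(i < e) wdiff id (uglov_runner x i) (vacuum (charge (uglov_runner x i))).
pose S := \sum_(i < e) `|charge (uglov_runner x i)|.
(* The weight is [W] for every [M], while [t_(i+1) - t_i >= M * r - 2 * S]. *)
exists (`|W| + S + S) => M hM i hi.
rewrite /rRouquier wt_Psi_mstr -/W !eta_t_Psi_mstr //; last exact: ltnW.
have hi0 := norm_le_sum_norm (fun i => charge (uglov_runner x i)) (ltnW hi).
have hi1 := norm_le_sum_norm (fun i => charge (uglov_runner x i)) hi.
move: hi0 hi1 => /=; rewrite -/S; set a := charge _; set b := charge _ => ha hb.
have hMr : M <= M * r%:Z by nia.
lia.
Qed.

End UglovBlocks.

Lemma rRouquier_eta e (r : int) c c' : (forall i, (i < e)%N -> eta_t e c i = eta_t e c' i) ->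
  wt e c = wt e c' -> rRouquier e r c -> rRouquier e r c'.
Proof. by move=> ht hw H i hi; rewrite -hw -!ht //; [exact: H | exact: ltnW]. Qed.

Lemma rRouquier_le e (r r' : int) c : r <= r' -> rRouquier e r c -> rRouquier e r' c.
Proof. by move=> hr H i hi; have := H i hi; lia. Qed.

Unset Implicit Arguments.

Theorem lemma3p8 (e r : nat) (He : (2 <= e)%N) (Hr : (1 <= r)%N)
  (R : mconf r -> Prop) (HR : is_mblock e r R) :
  exists Mstar : int, forall M : int, Mstar <= M ->
    (forall x, R x -> Rouquier e (Psi e r (mstr e r x (fun i => i%:Z * M)))) /\
    (exists B : conf -> Prop, rRouquier_block e r%:Z B /\
       forall x, R x -> B (Psi e r (mstr e r x (fun i => i%:Z * M)))).
Proof.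
have e_gt0 : (0 < e)%N by apply: leq_trans He.
have [x0 HR0] := HR.
have [Mstar HM] := Rouquier_Psi_mstr e_gt0 Hr x0.
exists Mstar => M hM; set P := fun x => Psi e r (mstr e r x (fun i => i%:Z * M)).
pose B c := mequiv e 1 (single (P x0)) (single c).
have B_P x : R x -> B (P x) by move=> /HR0; apply: Psi_mstr_block.
have B_Rouquier c : B c -> Rouquier e c.
  by move=> /(mequiv1_eta e_gt0)[ht hw]; apply: rRouquier_eta ht hw (HM M hM).
split; first by move=> x /B_P /B_Rouquier.
exists B; split=> //; split; first by exists (P x0).
by move=> c /B_Rouquier; apply: rRouquier_le; rewrite lez_nat.
Qed.
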